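(* Let $H$ and $\tilde H$ be equivalent dephased $d\times d$ complex Hadamard matrices. Then $\eta_c(H)=\eta_c(\tilde H)$, $\eta_r(H)=\eta_r(\tilde H)$, $\eta_{\bar c}(H)=\eta_{\bar c}(\tilde H)$ and $\eta_{\bar r}(H)=\eta_{\bar r}(\tilde H)$.
   Context: A $d\times d$ complex Hadamard matrix has unimodular entries and pairwise orthogonal columns; it is dephased if its first row and first column consist of $1$'s. Two complex Hadamard matrices $H_1,H_2$ are equivalent if $H_2=D_1P_1H_1P_2D_2$ with $D_1,D_2$ diagonal unitary and $P_1,P_2$ permutation matrices. Two distinct columns $C_A,C_B$ form an ER pair if $\overline{(C_A)_j}(C_B)_j\in\{1,-1\}$ for every $j$; ER pairs of rows are defined analogously. Two ER pairs of columns $\{C_1,C_2\}$ and $\{C_3,C_4\}$ are aligned if $\overline{(C_1)_k}(C_2)_k=\overline{(C_3)_k}(C_4)_k$ for every $k$ (analogously for rows). $\eta_c(H)$ (resp. $\eta_r(H)$) is the maximal number of pairwise disjoint ER pairs of columns (resp. rows) of $H$, and $\eta_{\bar c}(H)$ (resp. $\eta_{\bar r}(H)$) is the maximal number of pairwise disjoint ER pairs of columns (resp. rows) of $H$ that are mutually aligned. *)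

(* Complex numbers: any numClosedFieldType C
   (this covers the complex numbers, e.g. R[i] for a real closed field R). *)
From HB Require Import structures.
From mathcomp Require Import all_boot all_order all_algebra all_fingroup.
Set Implicit Arguments. Unset Strict Implicit. Unset Printing Implicit Defensive.
Import Order.TTheory GRing.Theory Num.Theory.
Local Open Scope ring_scope.

Section Hadamard.
Variable C : numClosedFieldType.

Definition complex_hadamard d (H : 'M[C]_d) : Prop :=
  (forall i j, `|H i j| = 1) /\
  (forall a b : 'I_d, a != b -> \sum_(k < d) (H k a)^* * H k b = 0).

Definition dephased d (H : 'M[C]_d) : Prop :=
  forall i j : 'I_d, (nat_of_ord i = 0%N -> H i j = 1) /\
                     (nat_of_ord j = 0%N -> H i j = 1).

Definition diag_unitary d (D : 'M[C]_d) : Prop :=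
  exists v : 'rV[C]_d, (forall j, `|v 0 j| = 1) /\ D = diag_mx v.

Definition hadamard_equiv d (H1 H2 : 'M[C]_d) : Prop :=
  exists (D1 D2 : 'M[C]_d) (s1 s2 : 'S_d),
    [/\ diag_unitary D1, diag_unitary D2 &
        H2 = D1 *m perm_mx s1 *m H1 *m perm_mx s2 *m D2].

Definition er_col d (H : 'M[C]_d) (a b : 'I_d) : bool :=
  (a != b) && [forall j, ((H j a)^* * H j b == 1) || ((H j a)^* * H j b == -1)].

Definition aligned_col d (H : 'M[C]_d) (p q : 'I_d * 'I_d) : bool :=
  [forall k, (H k p.1)^* * H k p.2 == (H k q.1)^* * H k q.2].

Definition disjoint_pairs d (p q : 'I_d * 'I_d) : bool :=
  [&& p.1 != q.1, p.1 != q.2, p.2 != q.1 & p.2 != q.2].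

(* S is a family of pairwise disjoint ER pairs of columns; each unordered
   pair {a,b} is represented once, as (a,b) with a < b *)
Definition er_family d (H : 'M[C]_d) (S : {set 'I_d * 'I_d}) : bool :=
  [forall p in S, (p.1 < p.2)%N && er_col H p.1 p.2] &&
  [forall p in S, forall q in S, (p != q) ==> disjoint_pairs p q].

Definition aligned_family d (H : 'M[C]_d) (S : {set 'I_d * 'I_d}) : bool :=
  [forall p in S, forall q in S, aligned_col H p q].

Definition eta_c d (H : 'M[C]_d) : nat :=
  \max_(S : {set 'I_d * 'I_d} | er_family H S) #|S|.

Definition eta_cbar d (H : 'M[C]_d) : nat :=
  \max_(S : {set 'I_d * 'I_d} | er_family H S && aligned_family H S) #|S|.

Definition eta_r d (H : 'M[C]_d) : nat := eta_c H^T.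
Definition eta_rbar d (H : 'M[C]_d) : nat := eta_cbar H^T.

End Hadamard.

(* An equivalence [H' (f i) (g j) = u i * H i j * w j] with unimodular [u]
   multiplies the ratio vector [k |-> conj (H k a) * H k b] of the columns
   [a], [b] by the constant [conj (w a) * w b], after relabelling rows by [f].
   If [H'] has a row of ones, that constant is the inverse of one entry of the
   ratio vector; for an ER pair it is therefore a sign equal to that entry.
   Hence [g] maps ER pairs of [H] to ER pairs of [H'] and preserves alignment
   between them, and disjoint families of pairs are carried to disjoint
   families of the same size.  The equivalence is symmetric and commutes with
   transposition, which gives all four equalities. *)

From HB Require Import structures.
From mathcomp Require Import all_boot all_order all_algebra all_fingroup.
From mathcomp Require Import ring.
Import Order.TTheory GRing.Theory Num.Theory.
Local Open Scope ring_scope.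
Set Implicit Arguments. Unset Strict Implicit.

Section Hadamard.
Variable C : numClosedFieldType.

Definition pm1 (x : C) : bool := (x == 1) || (x == -1).

Definition col_ratio d (M : 'M[C]_d) k a b := (M k a)^* * M k b.

Lemma pm1M x y : pm1 x -> pm1 y -> pm1 (x * y).
Proof.
by rewrite /pm1 => /orP[] /eqP-> /orP[] /eqP->;
  rewrite ?mulr1 ?mul1r ?mulrN1 ?opprK ?eqxx ?orbT.
Qed.

Lemma pm1_conj x : pm1 x -> x^* = x.
Proof. by rewrite /pm1 => /orP[] /eqP->; rewrite ?conjCN1 ?conjC1. Qed.

Lemma pm1_conjE x : pm1 x^* = pm1 x.
Proof.
apply/idP/idP => [x'pm1|/pm1_conj-> //].
by rewrite -(conjCK x) (pm1_conj x'pm1).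
Qed.

Lemma pm1_mulK x y : pm1 x -> x * y = 1 -> y = x.
Proof.
rewrite /pm1 => /orP[] /eqP-> xy; first by rewrite -xy mul1r.
by move: xy; rewrite mulN1r => /(congr1 -%R); rewrite opprK.
Qed.

Lemma col_ratio_sym d (M : 'M[C]_d) k a b :
  col_ratio M k b a = (col_ratio M k a b)^*.
Proof. by rewrite /col_ratio rmorphM /= conjCK mulrC. Qed.

Lemma er_colE d (M : 'M[C]_d) a b :
  er_col M a b = (a != b) && [forall k, pm1 (col_ratio M k a b)].
Proof. by []. Qed.

Lemma aligned_colE d (M : 'M[C]_d) p q :
  aligned_col M p q = [forall k, col_ratio M k p.1 p.2 == col_ratio M k q.1 q.2].
Proof. by []. Qed.

Lemma er_col_sym d (M : 'M[C]_d) a b : er_col M a b = er_col M b a.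
Proof.
rewrite !er_colE eq_sym; congr (_ && _); apply: eq_forallb => k.
by rewrite col_ratio_sym pm1_conjE.
Qed.

Lemma er_col_ratio_sym d (M : 'M[C]_d) a b k :
  er_col M a b -> col_ratio M k b a = col_ratio M k a b.
Proof.
by rewrite er_colE col_ratio_sym => /andP[_ /forallP /(_ k) /pm1_conj].
Qed.

Definition sort_pair d (p : 'I_d * 'I_d) : 'I_d * 'I_d :=
  if (p.1 < p.2)%N then p else (p.2, p.1).

Lemma sort_pairP d (p : 'I_d * 'I_d) : sort_pair p = p \/ sort_pair p = (p.2, p.1).
Proof. by rewrite /sort_pair; case: ifP; [left|right]. Qed.

Lemma sort_pair_lt d (p : 'I_d * 'I_d) :
  p.1 != p.2 -> ((sort_pair p).1 < (sort_pair p).2)%N.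
Proof.
case: p => a b /= ab; rewrite /sort_pair /=.
case: ifP => //= /negbT; rewrite -leqNgt leq_eqVlt => /orP[/eqP/val_inj ba|//].
by rewrite ba eqxx in ab.
Qed.

Lemma disjoint_pairs_sort d (p q : 'I_d * 'I_d) :
  disjoint_pairs (sort_pair p) (sort_pair q) = disjoint_pairs p q.
Proof.
by case: (sort_pairP p) => ->; case: (sort_pairP q) => ->;
  rewrite /disjoint_pairs /=; do !case: (_ != _).
Qed.

Lemma er_col_sort d (M : 'M[C]_d) p :
  er_col M (sort_pair p).1 (sort_pair p).2 = er_col M p.1 p.2.
Proof. by case: (sort_pairP p) => -> //=; rewrite er_col_sym. Qed.

Lemma aligned_col_sort d (M : 'M[C]_d) p q :
  er_col M p.1 p.2 -> er_col M q.1 q.2 ->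
  aligned_col M (sort_pair p) (sort_pair q) = aligned_col M p q.
Proof.
move=> erp erq; rewrite !aligned_colE; apply: eq_forallb => k.
by case: (sort_pairP p) => ->; case: (sort_pairP q) => -> /=;
  rewrite ?(er_col_ratio_sym _ erp) ?(er_col_ratio_sym _ erq).
Qed.

Definition phase_perm_equiv d (H H' : 'M[C]_d) : Prop :=
  exists (u w : 'I_d -> C) (f g : 'S_d),
    [/\ forall i, `|u i| = 1, forall j, `|w j| = 1 &
        forall i j, H' (f i) (g j) = u i * H i j * w j].

Lemma conj_unimodular (x : C) : `|x| = 1 -> x^* * x = 1.
Proof. by move=> x1; rewrite mulrC -normCK x1 expr1n. Qed.

Lemma phase_perm_equiv_sym d (H H' : 'M[C]_d) :
  phase_perm_equiv H H' -> phase_perm_equiv H' H.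
Proof.
case=> u [w [f [g [u1 w1 E]]]].
exists (fun i => (u ((f^-1)%g i))^*), (fun j => (w ((g^-1)%g j))^*), f^-1%g, g^-1%g.
split=> [i|j|i j]; rewrite ?norm_conjC //.
have -> : H' i j = H' (f ((f^-1)%g i)) (g ((g^-1)%g j)) by rewrite !permKV.
rewrite E.
rewrite !mulrA (conj_unimodular (u1 _)) mul1r -mulrA.
by rewrite [w _ * _]mulrC (conj_unimodular (w1 _)) mulr1.
Qed.

Lemma phase_perm_equiv_tr d (H H' : 'M[C]_d) :
  phase_perm_equiv H H' -> phase_perm_equiv H^T H'^T.
Proof.
case=> u [w [f [g [u1 w1 E]]]]; exists w, u, g, f; split=> // i j.
by rewrite !mxE E mulrC [u j * _]mulrC mulrA.
Qed.

Lemma hadamard_equiv_phase_perm d (H H' : 'M[C]_d) :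
  hadamard_equiv H H' -> phase_perm_equiv H H'.
Proof.
case=> _ [_ [s1 [s2 [[v1 [v1u ->]] [v2 [v2u ->]] ->]]]].
exists (fun i => v1 0 (s1^-1 i)%g), (fun j => v2 0 (s2 j)), s1^-1%g, s2.
split=> // i j.
have -> : diag_mx v1 *m perm_mx s1 *m H *m perm_mx s2 *m diag_mx v2
    = diag_mx v1 *m col_perm (s2^-1)%g (row_perm s1 H) *m diag_mx v2.
  by rewrite col_permE invgK row_permE !mulmxA.
by rewrite mul_mx_diag mul_diag_mx !mxE permKV permK.
Qed.

Section ErPairTransfer.
Variables (d : nat) (H H' : 'M[C]_d) (u w : 'I_d -> C) (f g : 'S_d) (r : 'I_d).
Hypotheses (u1 : forall i, `|u i| = 1) (H'r : forall j, H' r j = 1).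
Hypothesis E : forall i j, H' (f i) (g j) = u i * H i j * w j.

Lemma col_ratio_equiv k a b :
  col_ratio H' (f k) (g a) (g b) = col_ratio H k a b * ((w a)^* * w b).
Proof.
rewrite /col_ratio !E !rmorphM /= -[RHS]mul1r -(conj_unimodular (u1 k)).
ring.
Qed.

Lemma col_ratio_equiv_er a b j : er_col H a b ->
  col_ratio H' j (g a) (g b) =
  col_ratio H ((f^-1)%g j) a b * col_ratio H ((f^-1)%g r) a b.
Proof.
rewrite er_colE => /andP[_ /forallP /(_ ((f^-1)%g r)) er_r].
have one_r : col_ratio H ((f^-1)%g r) a b * ((w a)^* * w b) = 1.
  by rewrite -col_ratio_equiv permKV /col_ratio !H'r conjC1 mulr1.
by rewrite -{1}(permKV f j) col_ratio_equiv (pm1_mulK er_r one_r).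
Qed.

Lemma er_col_equiv a b : er_col H a b -> er_col H' (g a) (g b).
Proof.
move=> erab; have := erab; rewrite er_colE => /andP[ab /forallP erk].
rewrite er_colE (inj_eq perm_inj) ab; apply/forallP => j.
by rewrite col_ratio_equiv_er //; apply: pm1M; apply: erk.
Qed.

Lemma aligned_col_equiv p q : er_col H p.1 p.2 -> er_col H q.1 q.2 ->
  aligned_col H p q -> aligned_col H' (g p.1, g p.2) (g q.1, g q.2).
Proof.
rewrite !aligned_colE => erp erq /forallP al; apply/forallP => j /=.
by rewrite !col_ratio_equiv_er // !(eqP (al _)).
Qed.

Definition transfer_pair (p : 'I_d * 'I_d) := sort_pair (g p.1, g p.2).

Lemma transfer_pair_inj : {in [pred p : 'I_d * 'I_d | (p.1 < p.2)%N] &,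
  injective transfer_pair}.
Proof.
move=> [a b] [a' b']; rewrite !inE /= => lab lab'.
rewrite /transfer_pair /sort_pair /=.
case: ifP => _; case: ifP => _ [/perm_inj ea /perm_inj eb]; rewrite ?ea ?eb //.
all: by move: lab; rewrite ea eb ltnNge ltnW.
Qed.

Lemma er_family_transfer (S : {set 'I_d * 'I_d}) : er_family H S ->
  [/\ er_family H' (transfer_pair @: S), #|transfer_pair @: S| = #|S| &
      aligned_family H S -> aligned_family H' (transfer_pair @: S)].
Proof.
move=> /andP[/forall_inP erS /forall_inP disjS].
have erS' p : p \in S -> er_col H' (g p.1) (g p.2).
  by move=> /erS /andP[_]; apply: er_col_equiv.
split.
- apply/andP; split.
    apply/forall_inP => _ /imsetP[p pS ->]; rewrite /transfer_pair er_col_sort.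
    have erp := erS' p pS; rewrite erp andbT sort_pair_lt //.
    by case/andP: erp.
  apply/forall_inP => _ /imsetP[p pS ->]; apply/forall_inP => _ /imsetP[q qS ->].
  apply/implyP => npq; rewrite disjoint_pairs_sort.
  have {}npq : p != q by apply: contraNneq npq => ->.
  have : disjoint_pairs p q by apply: (implyP (forall_inP (disjS p pS) q qS)).
  by rewrite /disjoint_pairs /= !(inj_eq perm_inj).
- by apply: card_in_imset => p q /erS /andP[lp _] /erS /andP[lq _];
    apply: transfer_pair_inj.
- move=> /forall_inP al; apply/forall_inP => _ /imsetP[p pS ->].
  apply/forall_inP => _ /imsetP[q qS ->].
  rewrite /transfer_pair aligned_col_sort ?erS' //.
  have /andP[_ erp] := erS p pS; have /andP[_ erq] := erS q qS.
  exact: aligned_col_equiv (forall_inP (al p pS) q qS).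
Qed.

Lemma eta_c_equiv_le : (eta_c H <= eta_c H')%N /\ (eta_cbar H <= eta_cbar H')%N.
Proof.
split; apply/bigmax_leqP => S.
  by move=> /er_family_transfer [erS' <- _]; apply: leq_bigmax_cond.
move=> /andP[/er_family_transfer [erS' <- alS'] alS].
by apply: leq_bigmax_cond; rewrite erS' alS'.
Qed.

End ErPairTransfer.

Lemma eta_c_phase_perm_equiv d (H H' : 'M[C]_d) (r r' : 'I_d) :
  (forall j, H r j = 1) -> (forall j, H' r' j = 1) -> phase_perm_equiv H H' ->
  eta_c H = eta_c H' /\ eta_cbar H = eta_cbar H'.
Proof.
move=> Hr H'r HH'; have := phase_perm_equiv_sym HH'.
case: HH' => u [w [f [g [u1 _ E]]]] [u' [w' [f' [g' [u1' _ E']]]]].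
have [le_c le_cbar] := eta_c_equiv_le u1 H'r E.
have [ge_c ge_cbar] := eta_c_equiv_le u1' Hr E'.
by split; apply/eqP; rewrite eqn_leq ?le_c ?ge_c ?le_cbar ?ge_cbar.
Qed.

End Hadamard.

Theorem corollary3 (C : numClosedFieldType) (d : nat) (H Ht : 'M[C]_d) :
  complex_hadamard H -> complex_hadamard Ht ->
  dephased H -> dephased Ht ->
  hadamard_equiv H Ht ->
  [/\ eta_c H = eta_c Ht, eta_r H = eta_r Ht,
      eta_cbar H = eta_cbar Ht & eta_rbar H = eta_rbar Ht].
Proof.
case: d H Ht => [|n] H Ht _ _ dH dHt /hadamard_equiv_phase_perm HHt.
  by rewrite [H]thinmx0 [Ht]thinmx0.
have row0 (M : 'M[C]_n.+1) : dephased M -> forall j, M ord0 j = 1.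
  by move=> dM j; apply: (dM ord0 j).1.
have col0 (M : 'M[C]_n.+1) : dephased M -> forall j, M^T ord0 j = 1.
  by move=> dM j; rewrite mxE; apply: (dM j ord0).2.
have [eq_c eq_cbar] := eta_c_phase_perm_equiv (row0 _ dH) (row0 _ dHt) HHt.
have [eq_r eq_rbar] := eta_c_phase_perm_equiv (col0 _ dH) (col0 _ dHt)
  (phase_perm_equiv_tr HHt).
by split.
Qed.
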